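(* Let $(X,S)$ be an $S$-metric space, $r\ge0$, and let $\{x_n\}$ be an $r$-statistically convergent sequence in $X$. Then $st\text{-}LIM^r x_n$ is a closed set in the topology induced by $S$.
   Context: An $S$-metric on a nonempty set $X$ is a function $S:X^3\to[0,\infty)$ such that for all $x,y,z,a\in X$: $S(x,y,z)=0$ if and only if $x=y=z$, and $S(x,y,z)\le S(x,x,a)+S(y,y,a)+S(z,z,a)$. The open balls $B_S(x,r)=\{y\in X: S(y,y,x)<r\}$ form a base of the topology induced by $S$. For $B\subset\mathbb N$ the natural density is $\delta(B)=\lim_{n\to\infty}\frac{|\{k\in B:k\le n\}|}{n}$ when the limit exists. For $r\ge0$, $\{x_n\}$ is $r$-statistically convergent to $x$ if for every $\varepsilon>0$, $\delta(\{n\in\mathbb N: S(x_n,x_n,x)\ge r+\varepsilon\})=0$; $st\text{-}LIM^r x_n$ denotes the set of all such $x\in X$, and $\{x_n\}$ is called $r$-statistically convergent if this set is nonempty. *)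

From Stdlib Require Import Reals ClassicalDescription.
Open Scope R_scope.

Definition is_S_metric {X : Type} (S : X -> X -> X -> R) : Prop :=
  (forall x y z, 0 <= S x y z) /\
  (forall x y z, S x y z = 0 <-> (x = y /\ y = z)) /\
  (forall x y z a, S x y z <= S x x a + S y y a + S z z a).

Definition S_ball {X : Type} (S : X -> X -> X -> R) (x : X) (r : R) : X -> Prop :=
  fun y => S y y x < r.

(* topology generated by the base of open balls:
   U is open iff every point of U lies in some ball contained in U *)
Definition S_open {X : Type} (S : X -> X -> X -> R) (U : X -> Prop) : Prop :=
  forall y, U y -> exists x r, S_ball S x r y /\ (forall z, S_ball S x r z -> U z).

Definition S_closed {X : Type} (S : X -> X -> X -> R) (F : X -> Prop) : Prop :=
  S_open S (fun z => ~ F z).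

Fixpoint count_upto (B : nat -> Prop) (n : nat) : nat :=
  match n with
  | O => O
  | S m => (if excluded_middle_informative (B (S m)) then 1 else 0)%nat
           + count_upto B m
  end.

Definition density_zero (B : nat -> Prop) : Prop :=
  Un_cv (fun n => INR (count_upto B (S n)) / INR (S n)) 0.

Definition r_st_lim {X : Type} (S : X -> X -> X -> R) (r : R) (xs : nat -> X) (x : X) : Prop :=
  forall eps, 0 < eps -> density_zero (fun n => S (xs n) (xs n) x >= r + eps).

(* The set of r-statistical limits is closed because it is stable under
   small perturbations of the limit: in an S-metric space
   S(x,x,y) <= 2 S(x,x,z) + S(y,y,z) and S(x,x,y) = S(y,y,x), so if
   S(z,z,y) < eps/4 then every index n with S(x_n,x_n,y) >= r + eps also has
   S(x_n,x_n,z) >= r + eps/2.  Hence if y is not a limit, witnessed by eps,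
   no point of the ball B_S(y, eps/4) is a limit either. *)

From Stdlib Require Import Reals Lra Lia ClassicalDescription Classical.
Open Scope R_scope.

Lemma count_upto_mono (A B : nat -> Prop) :
  (forall n, A n -> B n) -> forall n, (count_upto A n <= count_upto B n)%nat.
Proof.
  intros AB n; induction n as [|n IH]; simpl; [lia|].
  destruct (excluded_middle_informative (A (S n))) as [An|];
    destruct (excluded_middle_informative (B (S n))) as [|nBn]; try lia.
  exfalso; exact (nBn (AB _ An)).
Qed.

Lemma density_zero_sub (A B : nat -> Prop) :
  (forall n, A n -> B n) -> density_zero B -> density_zero A.
Proof.
  unfold density_zero, Un_cv, R_dist; intros AB B0 e e_pos.
  destruct (B0 e e_pos) as [N HN]; exists N; intros n Hn.
  specialize (HN n Hn); rewrite Rminus_0_r in *.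
  set (d := INR (S n)) in *.
  assert (d_pos : 0 < d) by (apply lt_0_INR; lia).
  assert (cA_ge0 : 0 <= INR (count_upto A (S n))) by apply pos_INR.
  assert (cAB : INR (count_upto A (S n)) <= INR (count_upto B (S n)))
    by (apply le_INR, count_upto_mono, AB).
  assert (ratioA_ge0 : 0 <= INR (count_upto A (S n)) / d)
    by (apply Rmult_le_pos; [|apply Rlt_le, Rinv_0_lt_compat]; lra).
  assert (ratioAB : INR (count_upto A (S n)) / d <= INR (count_upto B (S n)) / d)
    by (apply Rmult_le_compat_r; [apply Rlt_le, Rinv_0_lt_compat|]; lra).
  rewrite Rabs_pos_eq in HN by lra; rewrite Rabs_pos_eq; lra.
Qed.

Section SMetric.

Variables (X : Type) (S : X -> X -> X -> R).
Hypothesis S_metric : is_S_metric S.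

Lemma S_diag (x : X) : S x x x = 0.
Proof. apply (proj1 (proj2 S_metric)); auto. Qed.

Lemma S_pair_triangle (x y z : X) : S x x y <= 2 * S x x z + S y y z.
Proof. pose proof (proj2 (proj2 S_metric) x x y z); lra. Qed.

Lemma S_sym (x y : X) : S x x y = S y y x.
Proof.
  pose proof (S_pair_triangle x y x); pose proof (S_pair_triangle y x y).
  rewrite S_diag in *; lra.
Qed.

Lemma r_st_lim_ball (r eps : R) (xs : nat -> X) (y z : X) :
  S_ball S y (eps / 4) z ->
  density_zero (fun n => S (xs n) (xs n) z >= r + eps / 2) ->
  density_zero (fun n => S (xs n) (xs n) y >= r + eps).
Proof.
  unfold S_ball; intros zy_small; apply density_zero_sub; intros n far_y.
  pose proof (S_pair_triangle y (xs n) z).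
  rewrite (S_sym y (xs n)), (S_sym y z) in *; lra.
Qed.

Lemma r_st_lim_closed (r : R) (xs : nat -> X) : S_closed S (r_st_lim S r xs).
Proof.
  intros y y_not_lim.
  apply not_all_ex_not in y_not_lim as [eps y_not_lim].
  apply imply_to_and in y_not_lim as [eps_pos not_dz].
  exists y, (eps / 4); split.
  - unfold S_ball; rewrite S_diag; lra.
  - intros z zy_small z_lim; apply not_dz.
    apply (r_st_lim_ball r eps xs y z zy_small), z_lim; lra.
Qed.

End SMetric.

Theorem corollary4p1 (X : Type) (S : X -> X -> X -> R) (r : R) (xs : nat -> X) :
  is_S_metric S -> 0 <= r ->
  (exists x, r_st_lim S r xs x) ->
  S_closed S (r_st_lim S r xs).
Proof.
  intros S_metric _ _; exact (r_st_lim_closed X S S_metric r xs).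
Qed.
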